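(* Let $Q$ be a loop and let $X$ be a normal subloop of $Q$ which is a commutative group and satisfies $X\le\mathrm{Nuc}_m(Q)\cap\mathrm{Nuc}_r(Q)$. Then $X$ induces an abelian congruence of $Q$.
   Context: A loop is a magma with identity in which all left and right translations are bijections. A subloop is normal if it is the kernel of a homomorphism. $\mathrm{Nuc}_m(Q)=\{x: y(xz)=(yx)z\ \forall y,z\}$, $\mathrm{Nuc}_r(Q)=\{x: y(zx)=(yz)x\ \forall y,z\}$. For a normal subloop $X$ of $Q$, $X$ induces an abelian congruence of $Q$ if the congruence with classes $aX$ has trivial Freese–McKenzie commutator with itself; equivalently, $Q$ is isomorphic to an abelian extension of $X$ by $Q/X$: a loop on $Q/X\times X$ with $(r,x)(s,y)=(rs,\varphi_{r,s}(x)+\psi_{r,s}(y)+\theta_{r,s})$, $\varphi_{r,s},\psi_{r,s}\in\mathrm{Aut}(X)$, $\theta_{r,s}\in X$, $\varphi_{r,1}=\mathrm{id}=\psi_{1,r}$, $\theta_{1,r}=0=\theta_{r,1}$. *)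

Set Implicit Arguments.

(* A loop, given equationally with its two divisions (universal-algebra
   signature (., \, /, 1)).  These axioms are equivalent to: magma with
   identity in which all left and right translations are bijections
   (ldiv x = inverse of L_x, rdiv _ x = inverse of R_x). *)
Record loop := Loop {
  carrier :> Type;
  lmul : carrier -> carrier -> carrier;
  lone : carrier;
  lldiv : carrier -> carrier -> carrier;   (* x \ y *)
  lrdiv : carrier -> carrier -> carrier;   (* y / x *)
  lone_l : forall x, lmul lone x = x;
  lone_r : forall x, lmul x lone = x;
  lldivK : forall x y, lldiv x (lmul x y) = y;
  lmulKl : forall x y, lmul x (lldiv x y) = y;
  lrdivK : forall x y, lrdiv (lmul y x) x = y;
  lmulKr : forall x y, lmul (lrdiv y x) x = y
}.

Arguments lmul {l}. Arguments lone {l}. Arguments lldiv {l}. Arguments lrdiv {l}.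

Definition loop_hom {Q L : loop} (f : Q -> L) : Prop :=
  forall x y : Q, f (lmul x y) = lmul (f x) (f y).

(* A subloop X (as a predicate) is normal: it is the kernel of a homomorphism. *)
Definition normal_subloop {Q : loop} (X : Q -> Prop) : Prop :=
  exists (L : loop) (f : Q -> L), loop_hom f /\ (forall x, X x <-> f x = lone).

Definition commutative_group_on {Q : loop} (X : Q -> Prop) : Prop :=
  (forall x y z, X x -> X y -> X z -> lmul (lmul x y) z = lmul x (lmul y z)) /\
  (forall x y, X x -> X y -> lmul x y = lmul y x).

Definition Nuc_m {Q : loop} (x : Q) : Prop :=
  forall y z : Q, lmul y (lmul x z) = lmul (lmul y x) z.
Definition Nuc_r {Q : loop} (x : Q) : Prop :=
  forall y z : Q, lmul y (lmul z x) = lmul (lmul y z) x.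

(* The congruence whose classes are the cosets aX:  y ~ x iff y in xX. *)
Definition coset_rel {Q : loop} (X : Q -> Prop) (x y : Q) : Prop :=
  exists u, X u /\ y = lmul x u.

Inductive term : Type :=
  | tVar : nat -> term
  | tOne : term
  | tMul : term -> term -> term
  | tLDiv : term -> term -> term
  | tRDiv : term -> term -> term.

Fixpoint teval {Q : loop} (v : nat -> Q) (t : term) : Q :=
  match t with
  | tVar n => v n
  | tOne => lone
  | tMul s u => lmul (teval v s) (teval v u)
  | tLDiv s u => lldiv (teval v s) (teval v u)
  | tRDiv s u => lrdiv (teval v s) (teval v u)
  end.

Definition env {Q : loop} (a : Q) (c : nat -> Q) : nat -> Q :=
  fun n => match n with O => a | S i => c i end.

(* Term condition C(alpha, alpha; 0), i.e. [alpha, alpha] = 0 for the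
   Freese--McKenzie commutator (the least delta with C(alpha,alpha;delta)). *)
Definition abelian_congruence {Q : loop} (alpha : Q -> Q -> Prop) : Prop :=
  forall (t : term) (a b : Q) (c d : nat -> Q),
    alpha a b -> (forall i, alpha (c i) (d i)) ->
    teval (env a c) t = teval (env a d) t ->
    teval (env b c) t = teval (env b d) t.

Definition induces_abelian_congruence {Q : loop} (X : Q -> Prop) : Prop :=
  abelian_congruence (coset_rel X).


(* Since X is normal and lies in the middle and right nuclei, an element p of
   X moves past any y at the cost of being replaced by its image under the
   automorphism p |-> y \ (p y) of X.  Induction on terms then gives
   t(w u) = t(w) H(u) for pointwise X-valued perturbations u, where H is a
   homomorphism X^N -> X (commutativity of X makes the division cases
   homomorphic).  If t(a,c) = t(a,d) with d = c v, cancellation gives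
   H(1,v) = 1, so for b = a u we get t(b,d) = t(a,c) H(u,1) H(1,v) = t(b,c). *)

Lemma lmulI (L : loop) (a b c : L) : lmul a b = lmul a c -> b = c.
Proof. intro E. rewrite <- (lldivK L a b), E. apply lldivK. Qed.

Lemma rmulI (L : loop) (a b c : L) : lmul b a = lmul c a -> b = c.
Proof. intro E. rewrite <- (lrdivK L a b), E. apply lrdivK. Qed.

Lemma lldivv (L : loop) (x : L) : lldiv x x = lone.
Proof. pose proof (lldivK L x lone) as E. rewrite lone_r in E. exact E. Qed.

Lemma lrdivv (L : loop) (x : L) : lrdiv x x = lone.
Proof. pose proof (lrdivK L x lone) as E. rewrite lone_l in E. exact E. Qed.

Lemma teval_ext (Q : loop) (v w : nat -> Q) (t : term) :
  (forall i, v i = w i) -> teval v t = teval w t.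
Proof. intro E; induction t; simpl; try rewrite IHt1, IHt2; auto. Qed.

Section Homomorphism.
Variables Q L : loop.
Variable f : Q -> L.
Hypothesis f_hom : loop_hom f.

Lemma hom_one : f lone = lone.
Proof. apply (lmulI L (f lone)). rewrite <- f_hom, !lone_r. reflexivity. Qed.

Lemma hom_ldiv (x y : Q) : f (lldiv x y) = lldiv (f x) (f y).
Proof. apply (lmulI L (f x)). rewrite <- f_hom, !lmulKl. reflexivity. Qed.

Lemma hom_rdiv (x y : Q) : f (lrdiv x y) = lrdiv (f x) (f y).
Proof. apply (rmulI L (f y)). rewrite <- f_hom, !lmulKr. reflexivity. Qed.

End Homomorphism.

Section NuclearAbelianKernel.
Variables Q L : loop.
Variable f : Q -> L.
Variable X : Q -> Prop.
Hypothesis f_hom : loop_hom f.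
Hypothesis X_ker : forall x, X x <-> f x = lone.
Hypothesis X_assoc : forall x y z, X x -> X y -> X z ->
  lmul (lmul x y) z = lmul x (lmul y z).
Hypothesis X_comm : forall x y, X x -> X y -> lmul x y = lmul y x.
Hypothesis X_Nuc_m : forall x, X x -> Nuc_m x.
Hypothesis X_Nuc_r : forall x, X x -> Nuc_r x.

Local Notation "x * y" := (lmul x y).
Local Notation "x \ y" := (lldiv x y) (at level 40, left associativity).
Local Notation "x / y" := (lrdiv x y).

Definition lconj (y p : Q) : Q := y \ (p * y).
Definition rconj (y r : Q) : Q := (y * r) / y.

Lemma mul_lconj y p : p * y = y * lconj y p.
Proof. unfold lconj. rewrite lmulKl. reflexivity. Qed.

Lemma lconj_rconj y r : lconj y (rconj y r) = r.
Proof. unfold lconj, rconj. rewrite lmulKr. apply lldivK. Qed.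

Lemma lconj_inj y p p' : lconj y p = lconj y p' -> p = p'.
Proof.
  intro E. apply (rmulI Q y). rewrite (mul_lconj y p), (mul_lconj y p'), E.
  reflexivity.
Qed.

Lemma X_one : X lone.
Proof. apply X_ker, hom_one; assumption. Qed.

Lemma X_mul a b : X a -> X b -> X (a * b).
Proof.
  intros Xa Xb. apply X_ker.
  rewrite f_hom, (proj1 (X_ker a) Xa), (proj1 (X_ker b) Xb). apply lone_l.
Qed.

Lemma X_ldiv a b : X a -> X b -> X (a \ b).
Proof.
  intros Xa Xb. apply X_ker.
  rewrite (hom_ldiv _ _ f f_hom), (proj1 (X_ker a) Xa), (proj1 (X_ker b) Xb).
  apply lldivv.
Qed.

Lemma X_rdiv a b : X a -> X b -> X (a / b).
Proof.
  intros Xa Xb. apply X_ker.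
  rewrite (hom_rdiv _ _ f f_hom), (proj1 (X_ker a) Xa), (proj1 (X_ker b) Xb).
  apply lrdivv.
Qed.

Lemma X_lconj y p : X p -> X (lconj y p).
Proof.
  intro Xp. apply X_ker. unfold lconj.
  rewrite (hom_ldiv _ _ f f_hom), f_hom, (proj1 (X_ker p) Xp), lone_l.
  apply lldivv.
Qed.

Lemma X_rconj y r : X r -> X (rconj y r).
Proof.
  intro Xr. apply X_ker. unfold rconj.
  rewrite (hom_rdiv _ _ f f_hom), f_hom, (proj1 (X_ker r) Xr), lone_r.
  apply lrdivv.
Qed.

Lemma X_mulACA a b c d : X a -> X b -> X c -> X d ->
  (a * b) * (c * d) = (a * c) * (b * d).
Proof.
  intros. rewrite X_assoc, <- (X_assoc b c d), (X_comm b c), (X_assoc c b d),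
    <- (X_assoc a c); auto using X_mul.
Qed.

Lemma ldivM a a' b b' : X a -> X a' -> X b -> X b' ->
  (a * a') \ (b * b') = (a \ b) * (a' \ b').
Proof.
  intros. apply (lmulI Q (a * a')). rewrite lmulKl, X_mulACA, !lmulKl;
    auto using X_ldiv.
Qed.

Lemma rdivM a a' b b' : X a -> X a' -> X b -> X b' ->
  (a * a') / (b * b') = (a / b) * (a' / b').
Proof.
  intros. apply (rmulI Q (b * b')). rewrite lmulKr, X_mulACA, !lmulKr;
    auto using X_rdiv.
Qed.

Lemma lconjM y p p' : X p -> X p' -> lconj y (p * p') = lconj y p * lconj y p'.
Proof.
  intros Xp Xp'. apply (lmulI Q y).
  rewrite <- (mul_lconj y (p * p')), <- (X_Nuc_m p' Xp' p y), (mul_lconj y p').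
  rewrite (X_Nuc_r _ (X_lconj y p' Xp') p y), (mul_lconj y p).
  symmetry. apply X_Nuc_r, X_lconj, Xp'.
Qed.

Lemma rconjM y r r' : X r -> X r' -> rconj y (r * r') = rconj y r * rconj y r'.
Proof.
  intros. apply (lconj_inj y). rewrite lconjM by auto using X_rconj.
  rewrite !lconj_rconj. reflexivity.
Qed.

Lemma mul_shift x y p q : X p -> X q ->
  (x * p) * (y * q) = (x * y) * (lconj y p * q).
Proof.
  intros Xp Xq.
  rewrite (X_Nuc_r q Xq (x * p) y), <- (X_Nuc_m p Xp x y), (mul_lconj y p).
  rewrite (X_Nuc_r _ (X_lconj y p Xp) x y). symmetry. apply X_Nuc_r, Xq.
Qed.

Lemma ldiv_shift x y p q : X p -> X q ->
  (x * p) \ (y * q) = (x \ y) * (lconj (x \ y) p \ q).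
Proof.
  intros Xp Xq. apply (lmulI Q (x * p)).
  rewrite mul_shift, !lmulKl; auto using X_ldiv, X_lconj.
Qed.

Lemma rdiv_shift x y p q : X p -> X q ->
  (x * p) / (y * q) = (x / y) * rconj y (p / q).
Proof.
  intros Xp Xq. apply (rmulI Q (y * q)).
  rewrite mul_shift, lconj_rconj, !lmulKr; auto using X_rconj, X_rdiv.
Qed.

Definition Xvalued (u : nat -> Q) : Prop := forall i, X (u i).

Definition vmul (u v : nat -> Q) : nat -> Q := fun i => u i * v i.

Definition Xmorph (H : (nat -> Q) -> Q) : Prop :=
  (forall u, Xvalued u -> X (H u)) /\
  (forall u v, Xvalued u -> Xvalued v -> H (vmul u v) = H u * H v).

Lemma term_shift (w : nat -> Q) (t : term) : exists2 H, Xmorph H &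
  forall u, Xvalued u -> teval (vmul w u) t = teval w t * H u.
Proof.
  induction t as [n | | s [H1 [XH1 H1M] E1] t [H2 [XH2 H2M] E2]
                     | s [H1 [XH1 H1M] E1] t [H2 [XH2 H2M] E2]
                     | s [H1 [XH1 H1M] E1] t [H2 [XH2 H2M] E2]]; simpl.
  - exists (fun u => u n); [split|]; auto.
  - exists (fun _ => lone); [split|]; intros; rewrite ?lone_r; auto using X_one.
  - exists (fun u => lconj (teval w t) (H1 u) * H2 u); [split|].
    + auto using X_mul, X_lconj.
    + intros u v Xu Xv. rewrite H1M, H2M, lconjM by auto.
      apply X_mulACA; auto using X_lconj.
    + intros u Xu. rewrite E1, E2 by auto. apply mul_shift; auto.
  - exists (fun u => lconj (teval w s \ teval w t) (H1 u) \ H2 u); [split|].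
    + auto using X_ldiv, X_lconj.
    + intros u v Xu Xv. rewrite H1M, H2M, lconjM by auto.
      apply ldivM; auto using X_lconj.
    + intros u Xu. rewrite E1, E2 by auto. apply ldiv_shift; auto.
  - exists (fun u => rconj (teval w t) (H1 u / H2 u)); [split|].
    + auto using X_rconj, X_rdiv.
    + intros u v Xu Xv. rewrite H1M, H2M, rdivM, rconjM by auto using X_rdiv.
      reflexivity.
    + intros u Xu. rewrite E1, E2 by auto. apply rdiv_shift; auto.
Qed.

End NuclearAbelianKernel.

Theorem lemma2p9 (Q : loop) (X : Q -> Prop) :
  normal_subloop X ->
  commutative_group_on X ->
  (forall x, X x -> Nuc_m x /\ Nuc_r x) ->
  induces_abelian_congruence X.
Proof.
  intros [L [f [f_hom X_ker]]] [X_assoc X_comm] X_nuc t a b c d [u [Xu ->]] Xcd Eac.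
  set (v i := lldiv (c i) (d i)).
  assert (Xv : Xvalued Q X v).
  { intro i. destruct (Xcd i) as [p [Xp Ep]]. unfold v. rewrite Ep, lldivK. exact Xp. }
  destruct (term_shift Q L f X f_hom X_ker X_assoc X_comm
              (fun x Xx => proj1 (X_nuc x Xx)) (fun x Xx => proj2 (X_nuc x Xx))
              (env a c) t) as [H [_ HM] E].
  pose proof (X_one Q L f X f_hom X_ker) as X1.
  set (U := env u (fun _ => lone)).
  set (V := env lone v).
  assert (XU : Xvalued Q X U) by (intros [|i]; simpl; auto).
  assert (XV : Xvalued Q X V) by (intros [|i]; simpl; auto).
  assert (Ed : forall i, d i = lmul (c i) (v i))
    by (intro i; unfold v; rewrite lmulKl; reflexivity).
  assert (EU : teval (env (lmul a u) c) t = lmul (teval (env a c) t) (H U)).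
  { rewrite <- E by auto.
    apply teval_ext; intros [|i]; unfold vmul, U, V; simpl; rewrite ?lone_r; auto. }
  assert (EV : teval (env a d) t = lmul (teval (env a c) t) (H V)).
  { rewrite <- E by auto.
    apply teval_ext; intros [|i]; unfold vmul, U, V; simpl; rewrite ?lone_r; auto. }
  assert (EUV : teval (env (lmul a u) d) t = lmul (teval (env a c) t) (H (vmul Q U V))).
  { rewrite <- E by (intro i; apply (X_mul Q L f X f_hom X_ker); auto).
    apply teval_ext; intros [|i]; unfold vmul, U, V; simpl;
      rewrite ?lone_r, ?lone_l; auto. }
  assert (HV : H V = lone).
  { apply (lmulI Q (teval (env a c) t)). rewrite <- EV, lone_r. symmetry. exact Eac. }
  rewrite EUV, HM, HV, lone_r, EU by auto. reflexivity.
Qed.
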